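(* Let $\Sigma$ be an alphabet with $n$ letters, let $\ell\notin\Sigma$, let $P=p_1p_2\cdots p_n$ be a permutation of $\Sigma$, and let $\pi:\ \pi_1<\pi_2<\cdots<\pi_{n+1}$ be a total ordering of $\Sigma\cup\{\ell\}$ with $\pi_1\neq \ell$. Define a sequence $\beta_1,\beta_2,\dots$ of elements of $\Sigma\cup\{\ell\}$ by $\beta_1=\pi_1$ and, whenever $\beta_j=p_x$ for some $x$ with $p_x<_\pi \min_\pi\{p_n,\ell\}$, by $$\beta_{j+1}=\min_\pi\{p_{x+1},\dots,p_n,\ell\};$$ the sequence stops at the first index $w$ with $\beta_w=\min_\pi\{p_n,\ell\}$. For $1\le j\le w$ let $S_j$ denote the lineage taxon string of the taxon $\beta_j$ in the line tree $T(P)$ under $\pi$. Then every $S_j$ is nonempty, and $$P = S_1[1,|S_1|-1]\,\beta_1\,S_2[1,|S_2|-1]\,\beta_2\cdots S_{w-1}[1,|S_{w-1}|-1]\,\beta_{w-1}\,S'_w,$$ where $$S'_w=\begin{cases} S_w & \text{if } \beta_w=\ell,\\ S_w[1,|S_w|-1]\,\beta_w & \text{if } \beta_w\neq\ell,\end{cases}$$ $S[1,|S|-1]$ denotes the string obtained from a nonempty string $S$ by deleting its last letter, and juxtaposition denotes concatenation.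
   Context: Line tree $T(P)$: for a permutation $P=p_1\cdots p_n$ of $\Sigma$ and a letter $\ell\notin\Sigma$, $T(P)$ is the rooted tree with leaf set $\Sigma\cup\{\ell\}$, internal nodes $r,v_1,\dots,v_n$, and directed edges $(r,v_1)$, $(v_i,v_{i+1})$ and $(v_i,p_i)$ for $1\le i\le n-1$, and $(v_n,p_n)$, $(v_n,\ell)$. The root $r$ has outdegree 1. Lineage taxon string (LTS): let $T$ be a rooted binary tree whose root has outdegree 1 and whose leaves are labeled bijectively by a taxon set $X$, and let $\pi$ be a total ordering of $X$. For a node $u$, $\min_\pi(u)$ is the $\pi$-smallest taxon among the leaves below or equal to $u$. Label the root with the $\pi$-smallest taxon of $X$, and label each non-root internal node $u$ (which has two children $u',u''$) with the $\pi$-larger of $\min_\pi(u')$ and $\min_\pi(u'')$. Each taxon $f$ is then the label of exactly one internal node $w_f$, and the leaf $f$ lies below $w_f$. The LTS of $f$ in $T$ under $\pi$ is the sequence of labels of the nodes strictly between $w_f$ and the leaf $f$ on the directed path from $w_f$ to $f$, listed in order from $w_f$ towards $f$ (it may be empty). For example, for $P=edabc$ and the ordering $a<b<c<d<e<\ell$, the LTSs of $a,b,c$ in $T(P)$ are $edb$, $c$, $\ell$, and those of $d,e,\ell$ are empty. *)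

From mathcomp Require Import all_boot.
Set Implicit Arguments. Unset Strict Implicit. Unset Printing Implicit Defensive.

Section LTS.
Variable T : eqType.

(** A total ordering pi of the taxa, given as the list pi_1 < pi_2 < ... *)
Definition ltpi (pi : seq T) (x y : T) : bool := index x pi < index y pi.
Definition minpi2 (pi : seq T) (a b : T) : T := if index a pi <= index b pi then a else b.
Definition maxpi2 (pi : seq T) (a b : T) : T := if index a pi <= index b pi then b else a.
Definition minpi (pi : seq T) (a : T) (s : seq T) : T := foldl (minpi2 pi) a s.

(** Rooted binary trees with leaves labelled by taxa.  A rooted tree whose
    root r has outdegree 1 is represented by the binary tree hanging below r. *)
Inductive btree : Type := Leaf of T | Node of btree & btree.

Fixpoint leaves (t : btree) : seq T :=
  match t with Leaf a => [:: a] | Node l r => leaves l ++ leaves r end.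

Fixpoint tmin (pi : seq T) (t : btree) : T :=
  match t with Leaf a => a | Node l r => minpi2 pi (tmin pi l) (tmin pi r) end.

Definition nlabel (pi : seq T) (l r : btree) : T := maxpi2 pi (tmin pi l) (tmin pi r).

Fixpoint path_labels (pi : seq T) (t : btree) (f : T) : seq T :=
  match t with
  | Leaf _ => [::]
  | Node l r => nlabel pi l r ::
      (if f \in leaves l then path_labels pi l f else path_labels pi r f)
  end.

(** Lineage taxon string of f in the planted tree (root r above t) under pi:
    the root r is labelled with the pi-smallest taxon (= tmin pi t); w_f is the
    node labelled f on the path from r to the leaf f; the LTS is the list of the
    labels of the nodes strictly between w_f and the leaf f. *)
Definition lts (pi : seq T) (t : btree) (f : T) : seq T :=
  let p := tmin pi t :: path_labels pi t f in drop (index f p).+1 p.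

Fixpoint line_tree (l : T) (P : seq T) : btree :=
  match P with
  | [::] => Leaf l
  | [:: p] => Node (Leaf p) (Leaf l)
  | p :: P' => Node (Leaf p) (line_tree l P')
  end.

(** The sequence beta_1, beta_2, ..., beta_w: starting from cur, with
    m = min_pi{p_n, l}; if cur = p_x <_pi m, the next element is
    min_pi{p_{x+1},...,p_n,l}; stop at the first element equal to m.
    (fuel only bounds the recursion; size P + 1 suffices.) *)
Fixpoint betas (pi P : seq T) (l m : T) (fuel : nat) (cur : T) : seq T :=
  match fuel with
  | 0 => [:: cur]
  | k.+1 =>
      if cur == m then [:: cur]
      else cur :: betas pi P l m k (minpi pi l (drop (index cur P).+1 P))
  end.

Definition droplast (s : seq T) : seq T := take (size s).-1 s.

End LTS.

(* The walk beta_1, beta_2, ... visits suffix minima: if the walk stands at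
   b = min_pi(Q, l) for the remaining suffix Q = Q1 ++ b :: Q2 of P, then every
   taxon of Q1 is pi-above b, so each spine node of Q1 is labelled by its own
   leaf, and the node above the leaf b is labelled by min_pi(Q2, l), the next
   taxon of the walk.  Hence the LTS of b is Q1 followed by the next taxon
   (or, when b = l, the LTS of l is the whole of Q).

   The invariant [suffix_ready] records where the walk stands; it locates
   the LTS of the current taxon inside the remaining subtree and is preserved
   by one step of the walk. *)

From mathcomp Require Import all_boot.
Set Implicit Arguments. Unset Strict Implicit. Unset Printing Implicit Defensive.

Lemma drop_index_cat (T : eqType) (x : T) s1 s2 : x \notin s1 ->
  drop (index x (s1 ++ x :: s2)).+1 (s1 ++ x :: s2) = s2.
Proof.
move=> hx; rewrite index_cat (negbTE hx) /= eqxx addn0 drop_cat ltnNge leqnSn /=.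
by rewrite subSn // subnn /= drop0.
Qed.

Lemma droplast_rcons (T : eqType) (s : seq T) x : droplast (rcons s x) = s.
Proof. by rewrite /droplast size_rcons -cats1 take_size_cat. Qed.

Section PiOrder.
Variables (T : eqType) (pi : seq T).

Lemma index_inj x y : x \in pi -> y \in pi -> index x pi = index y pi -> x = y.
Proof. by move=> hx hy e; rewrite -(nth_index x hx) -(nth_index x hy) e. Qed.

Lemma minpi2_mem a b : minpi2 pi a b \in [:: a; b].
Proof. by rewrite /minpi2; case: ifP => _; rewrite !inE eqxx ?orbT. Qed.

Lemma minpi2_le a b :
  index (minpi2 pi a b) pi <= index a pi /\ index (minpi2 pi a b) pi <= index b pi.
Proof.
by rewrite /minpi2; case: (leqP (index a pi) (index b pi)) => h; split => //; apply: ltnW.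
Qed.

Lemma minpi2_eq a b x : a \in pi -> b \in pi -> x \in [:: a; b] ->
  index x pi <= index a pi -> index x pi <= index b pi -> minpi2 pi a b = x.
Proof.
move=> ha hb hx hxa hxb; have [hma hmb] := minpi2_le a b.
have hm := minpi2_mem a b; apply: index_inj.
- by move: hm; rewrite !inE => /orP[] /eqP->.
- by move: hx; rewrite !inE => /orP[] /eqP->.
apply/eqP; rewrite eqn_leq; apply/andP; split.
- by move: hx; rewrite !inE => /orP[] /eqP->.
- by move: hm; rewrite !inE => /orP[] /eqP->.
Qed.

Lemma minpi_mem a s : minpi pi a s \in a :: s.
Proof.
elim: s a => [|x s IH] a; first by rewrite /minpi /= inE.
have -> : minpi pi a (x :: s) = minpi pi (minpi2 pi a x) s by [].
have := IH (minpi2 pi a x); rewrite inE => /orP[/eqP->|h]; last by rewrite !inE h !orbT.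
by have := minpi2_mem a x; rewrite !inE => /orP[] /eqP->; rewrite eqxx ?orbT.
Qed.

Lemma minpi_le a s y : y \in a :: s -> index (minpi pi a s) pi <= index y pi.
Proof.
elim: s a y => [|x s IH] a y; first by rewrite /minpi /= inE => /eqP->.
have -> : minpi pi a (x :: s) = minpi pi (minpi2 pi a x) s by [].
have [hma hmx] := minpi2_le a x.
rewrite !inE => /or3P[/eqP->|/eqP->|h].
- exact: leq_trans (IH _ _ (mem_head _ _)) hma.
- exact: leq_trans (IH _ _ (mem_head _ _)) hmx.
- by apply: IH; rewrite inE h orbT.
Qed.

Lemma minpi_lt a s y : {subset a :: s <= pi} -> y \in a :: s ->
  y != minpi pi a s -> index (minpi pi a s) pi < index y pi.
Proof.
move=> spi hy hne; rewrite ltn_neqAle minpi_le // andbT.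
by apply: contra hne => /eqP e; apply/eqP/index_inj; rewrite ?spi ?minpi_mem.
Qed.

End PiOrder.

Section LineTreeLabels.
Variables (T : eqType) (pi : seq T) (l : T).

Lemma line_tree_cons q Q : line_tree l (q :: Q) = Node (Leaf q) (line_tree l Q).
Proof. by case: Q. Qed.

Lemma tmin_line_tree_mem Q : tmin pi (line_tree l Q) \in l :: Q.
Proof.
elim: Q => [|q Q IH]; first by rewrite /= inE.
rewrite line_tree_cons /=.
have := minpi2_mem pi q (tmin pi (line_tree l Q)); rewrite !inE => /orP[] /eqP->.
  by rewrite eqxx orbT.
by move: IH; rewrite inE => /orP[->//|h]; rewrite h !orbT.
Qed.

Lemma tmin_line_tree_le Q y :
  y \in l :: Q -> index (tmin pi (line_tree l Q)) pi <= index y pi.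
Proof.
elim: Q y => [|q Q IH] y; first by rewrite /= inE => /eqP->.
rewrite line_tree_cons /=; have [hq ht] := minpi2_le pi q (tmin pi (line_tree l Q)).
rewrite !inE => /or3P[/eqP->|/eqP->|h] //.
- exact: leq_trans ht (IH l (mem_head _ _)).
- by apply: leq_trans ht (IH _ _); rewrite inE h orbT.
Qed.

Lemma tmin_line_tree Q : {subset l :: Q <= pi} -> tmin pi (line_tree l Q) = minpi pi l Q.
Proof.
move=> spi; apply: index_inj; [exact/spi/tmin_line_tree_mem|exact/spi/minpi_mem|].
by apply/eqP; rewrite eqn_leq tmin_line_tree_le ?minpi_mem //= minpi_le // tmin_line_tree_mem.
Qed.

(* [spine_labels Q1 Q2]: labels of the spine nodes of T(Q1 ++ Q2) whose leaf
   children are the taxa of Q1, from the top down. *)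
Fixpoint spine_labels (Q1 Q2 : seq T) : seq T :=
  match Q1 with
  | [::] => [::]
  | q :: Q1' => nlabel pi (Leaf q) (line_tree l (Q1' ++ Q2)) :: spine_labels Q1' Q2
  end.

Lemma spine_labels_cat Q1 Q2 Q3 :
  spine_labels (Q1 ++ Q2) Q3 = spine_labels Q1 (Q2 ++ Q3) ++ spine_labels Q2 Q3.
Proof. by elim: Q1 => [|q Q1 IH] //=; rewrite IH catA. Qed.

Lemma path_labels_cat f Q1 Q2 : f \notin Q1 ->
  path_labels pi (line_tree l (Q1 ++ Q2)) f =
  spine_labels Q1 Q2 ++ path_labels pi (line_tree l Q2) f.
Proof.
elim: Q1 => [|q Q1 IH] //; rewrite inE negb_or => /andP[hq hf].
by rewrite cat_cons line_tree_cons /= inE (negbTE hq) IH.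
Qed.

Lemma path_labels_leaf f Q1 Q2 : f \notin Q1 ->
  path_labels pi (line_tree l (Q1 ++ f :: Q2)) f = spine_labels (rcons Q1 f) Q2.
Proof.
move=> hf; rewrite path_labels_cat // line_tree_cons /= inE eqxx /=.
by rewrite -cats1 spine_labels_cat.
Qed.

Lemma path_labels_root Q : l \notin Q ->
  path_labels pi (line_tree l Q) l = spine_labels Q [::].
Proof. by move=> hl; rewrite -{1}[Q]cats0 path_labels_cat // cats0. Qed.

(* A spine node whose leaf is pi-above some taxon further down carries the
   label of its own leaf. *)
Lemma spine_labels_above Q1 Q2 z : z \in l :: Q2 ->
  (forall q, q \in Q1 -> index z pi < index q pi) -> spine_labels Q1 Q2 = Q1.
Proof.
move=> hz; elim: Q1 => [|q Q1 IH] hQ1 //=.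
rewrite IH => [|x hx]; last by apply: hQ1; rewrite inE hx orbT.
have hzt : index (tmin pi (line_tree l (Q1 ++ Q2))) pi <= index z pi.
  by apply: tmin_line_tree_le; move: hz; rewrite !inE mem_cat => /orP[] ->; rewrite ?orbT.
by rewrite /nlabel /maxpi2 /= leqNgt (leq_ltn_trans hzt (hQ1 q (mem_head _ _))).
Qed.

Lemma spine_labels_at_min Q1 b Q2 : b \notin Q1 ->
  {subset l :: Q1 ++ b :: Q2 <= pi} -> minpi pi l (Q1 ++ b :: Q2) = b ->
  spine_labels (rcons Q1 b) Q2 = rcons Q1 (minpi pi l Q2).
Proof.
move=> hbQ1 spi hb; have inQ y : y \in l :: Q2 -> y \in l :: Q1 ++ b :: Q2.
  by rewrite !inE mem_cat inE => /orP[] ->; rewrite ?orbT.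
rewrite -cats1 spine_labels_cat /= -cats1; congr (_ ++ [:: _]).
  apply: (spine_labels_above (z := b)); first by rewrite !inE eqxx orbT.
  move=> q hq; rewrite -{1}hb minpi_lt //; first by rewrite !inE mem_cat hq orbT.
  by rewrite hb; apply: contraNneq hbQ1 => <-.
rewrite /nlabel /maxpi2 /= tmin_line_tree => [|y hy]; last exact/spi/inQ.
by rewrite -{1}hb minpi_le // inQ // minpi_mem.
Qed.

Lemma spine_labels_at_root Q : l \notin Q -> {subset l :: Q <= pi} ->
  minpi pi l Q = l -> spine_labels Q [::] = Q.
Proof.
move=> hl spi hm; apply: (spine_labels_above (z := l)); first exact: mem_head.
move=> q hq; rewrite -{1}hm minpi_lt // ?inE ?hq ?orbT // hm.
by apply: contraNneq hl => <-.
Qed.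

End LineTreeLabels.

Section Decomposition.
Variables (T : eqType) (pi P : seq T) (l : T).
Hypotheses (uniq_lP : uniq (l :: P)) (pi_covers : {subset l :: P <= pi}).

Local Notation S := (lts pi (line_tree l P)).
Local Notation stop := (minpi2 pi (last l P) l).

Lemma suffix_covered pre Q : P = pre ++ Q -> {subset l :: Q <= pi}.
Proof.
move=> hP x; rewrite inE => /orP[/eqP->|hx]; apply: pi_covers; rewrite ?mem_head //.
by rewrite inE hP mem_cat hx !orbT.
Qed.

Lemma suffix_uniq pre Q : P = pre ++ Q -> uniq (l :: Q).
Proof.
move=> hP; move: uniq_lP; rewrite hP /= mem_cat negb_or cat_uniq.
by case/andP=> /andP[_ ->] /and3P[_ _ ->].
Qed.

Lemma suffix_disjoint pre Q x : P = pre ++ Q -> x \in l :: Q -> x \notin pre.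
Proof.
move=> hP; move: uniq_lP; rewrite hP /= mem_cat negb_or cat_uniq.
case/andP=> /andP[hl _] /and3P[_ /hasPn hQ _]; rewrite inE => /orP[/eqP->//|hx].
exact: hQ.
Qed.

Lemma suffix_split_notin pre Q1 b Q2 : P = pre ++ Q1 ++ b :: Q2 -> b \notin Q1 ++ Q2.
Proof.
move/suffix_uniq; rewrite cons_uniq -[b :: Q2]cat1s uniq_catCA cat1s cons_uniq.
by case/andP=> _ /andP[].
Qed.

(* The walk has reached the suffix Q of P = pre ++ Q: the labels of the root
   and of the spine nodes of pre end with min_pi(Q, l), and otherwise are
   taxa of pre. *)
Definition suffix_ready (pre Q : seq T) : Prop :=
  P = pre ++ Q /\ exists2 A : seq T, {subset A <= pre} &
    tmin pi (line_tree l P) :: spine_labels pi l pre Q = rcons A (minpi pi l Q).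

(* The node labelled b = min_pi(Q, l) is the last node above the suffix, so
   the LTS of b is read inside T(Q). *)
Lemma lts_suffix_min pre Q : suffix_ready pre Q ->
  S (minpi pi l Q) = path_labels pi (line_tree l Q) (minpi pi l Q).
Proof.
case=> hP [A hA hK]; set b := minpi pi l Q.
have hbpre : b \notin pre by apply: suffix_disjoint hP (minpi_mem _ _ _).
have hbA : b \notin A by apply: contra hbpre; apply: hA.
have e : path_labels pi (line_tree l P) b =
    spine_labels pi l pre Q ++ path_labels pi (line_tree l Q) b.
  by rewrite {1}hP path_labels_cat.
by rewrite /lts e -cat_cons hK cat_rcons drop_index_cat.
Qed.

Lemma suffix_ready_step pre Q1 b Q2 : suffix_ready pre (Q1 ++ b :: Q2) ->
  minpi pi l (Q1 ++ b :: Q2) = b -> suffix_ready (pre ++ rcons Q1 b) Q2.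
Proof.
case=> hP [A hA hK] hb.
have := suffix_split_notin hP; rewrite mem_cat => /norP[hbQ1 _].
split; first by rewrite hP -cats1 -!catA.
exists (rcons A b ++ Q1).
  move=> x; rewrite mem_cat mem_rcons inE !mem_cat mem_rcons inE.
  by case/orP=> [/orP[->|/hA->]|->]; rewrite ?orbT.
rewrite spine_labels_cat cat_rcons spine_labels_at_min //; last exact: suffix_covered hP.
by rewrite -cat_cons hK hb rcons_cat.
Qed.

Lemma last_suffix_mem pre Q : P = pre ++ Q -> Q != [::] -> last l P \in Q.
Proof. by move=> ->; rewrite last_cat; case: Q => //= q Q _; apply: mem_last. Qed.

Lemma stop_at_root pre Q : P = pre ++ Q -> Q != [::] -> minpi pi l Q = l -> stop = l.
Proof.
move=> hP hQ hm; have hlast := last_suffix_mem hP hQ.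
apply: minpi2_eq; rewrite ?pi_covers ?mem_head ?inE ?eqxx ?orbT //.
  by rewrite {3}hP mem_cat hlast !orbT.
by rewrite -{1}hm minpi_le // inE hlast orbT.
Qed.

Lemma stop_at_last pre Q1 b : P = pre ++ rcons Q1 b -> minpi pi l (rcons Q1 b) = b -> stop = b.
Proof.
move=> hP hm; have hb : last l P = b by rewrite hP last_cat last_rcons.
have hbP : b \in P by rewrite hP mem_cat mem_rcons mem_head orbT.
rewrite hb; apply: minpi2_eq; rewrite ?pi_covers ?inE ?hbP ?eqxx ?orbT //.
by rewrite -{1}hm minpi_le ?mem_head.
Qed.

Lemma stop_not_reached pre Q1 b Q2 : P = pre ++ Q1 ++ b :: Q2 -> Q2 != [::] ->
  b != l -> b != stop.
Proof.
move=> hP hQ2 hbl; have hlast : last l P \in Q2.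
  by apply: (last_suffix_mem (pre := pre ++ Q1 ++ [:: b])); rewrite // hP -!catA.
have := suffix_split_notin hP; rewrite mem_cat => /norP[_ hbQ2].
have := minpi2_mem pi (last l P) l; rewrite !inE.
by case/orP=> /eqP->; [apply: contraNneq hbQ2 => ->|].
Qed.

Lemma betas_nonnil fuel cur : betas pi P l stop fuel cur != [::].
Proof. by case: fuel => //= k; case: ifP. Qed.

Definition decomposition (Q bs : seq T) : Prop :=
  let bw := last l bs in
  let S'w := if bw == l then S bw else droplast (S bw) ++ [:: bw] in
  [/\ last l bs = stop, all (fun b => S b != [::]) bs
    & Q = flatten [seq droplast (S b) ++ [:: b] | b <- droplast bs] ++ S'w].

Lemma decomposition_cons Q1 b c Q2 bs : bs != [::] -> S b = rcons Q1 c ->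
  decomposition Q2 bs -> decomposition (Q1 ++ b :: Q2) (b :: bs).
Proof.
case: bs => // c' bs _ hSb [hlast hall hQ2]; split => //.
  by apply/andP; split => //; rewrite hSb; case: (Q1).
rewrite {1}hQ2 -[droplast (b :: _)]/(b :: droplast (c' :: bs)) map_cons.
by rewrite -[flatten (_ :: _)]/(_ ++ flatten _) hSb droplast_rcons -!catA.
Qed.

Lemma lts_at_min pre Q1 b Q2 : suffix_ready pre (Q1 ++ b :: Q2) ->
  minpi pi l (Q1 ++ b :: Q2) = b -> S b = rcons Q1 (minpi pi l Q2).
Proof.
move=> hR hb; have hP := proj1 hR.
have := suffix_split_notin hP; rewrite mem_cat => /norP[hbQ1 _].
rewrite -{1}hb (lts_suffix_min hR) hb path_labels_leaf // spine_labels_at_min //.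
exact: suffix_covered hP.
Qed.

Lemma decomposition_at_root pre Q : suffix_ready pre Q -> Q != [::] ->
  minpi pi l Q = l -> decomposition Q [:: l].
Proof.
move=> hR hQ hm; have hP := proj1 hR.
have hlQ : l \notin Q by have /andP[] := suffix_uniq hP.
have hSl : S l = Q.
  have := lts_suffix_min hR; rewrite hm => ->.
  rewrite path_labels_root // spine_labels_at_root //.
  exact: suffix_covered hP.
by split; rewrite /= ?eqxx ?hSl ?hQ // (stop_at_root hP hQ hm).
Qed.

Lemma decomposition_at_last pre Q1 b : suffix_ready pre (rcons Q1 b) ->
  minpi pi l (rcons Q1 b) = b -> b != l -> decomposition (rcons Q1 b) [:: b].
Proof.
move=> hR hb hbl; have hP := proj1 hR.
have hSb : S b = rcons Q1 (minpi pi l [::]) by apply: (lts_at_min (pre := pre)); rewrite cats1.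
split; rewrite /= ?(negbTE hbl) ?hSb ?droplast_rcons ?cats1 //.
- exact/esym/(stop_at_last hP).
- by case: (Q1).
Qed.

Lemma decomposition_from_suffix fuel pre Q : suffix_ready pre Q -> Q != [::] ->
  size Q <= fuel -> decomposition Q (betas pi P l stop fuel (minpi pi l Q)).
Proof.
elim: fuel pre Q => [|k IH] pre Q hR hQ hsz; first by case: Q hR hQ hsz.
move eb: (minpi pi l Q) => b; have [hbl|hbl] := eqVneq b l.
  have hm : minpi pi l Q = l by rewrite eb.
  by rewrite /= hbl (stop_at_root (proj1 hR) hQ hm) eqxx; apply: decomposition_at_root hR hQ hm.
have hbQ : b \in Q by have := minpi_mem pi l Q; rewrite eb inE (negbTE hbl).
move: hR hQ hsz eb; case/splitPr: hbQ => Q1 Q2 hR hQ hsz hb.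
have [hQ2 | hQ2] := eqVneq Q2 [::].
  subst Q2; rewrite cats1 in hR hb *; rewrite /= (stop_at_last (proj1 hR) hb) eqxx.
  exact: decomposition_at_last hR hb hbl.
have hP := proj1 hR.
have hbpre : b \notin pre ++ Q1.
  have := suffix_split_notin hP; rewrite !mem_cat => /norP[hbQ1 _].
  by rewrite negb_or hbQ1 (suffix_disjoint hP) // !inE mem_cat mem_head !orbT.
rewrite /= (negbTE (stop_not_reached hP hQ2 hbl)) hP catA drop_index_cat // -catA -hP.
apply: decomposition_cons (betas_nonnil _ _) (lts_at_min hR hb) _.
apply: IH (suffix_ready_step hR hb) hQ2 _.
by move: hsz; rewrite size_cat /= addnS ltnS => /(leq_trans (leq_addl _ _)).
Qed.

End Decomposition.

Lemma head_minpi (T : eqType) (pi : seq T) a s :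
  perm_eq pi (a :: s) -> head a pi = minpi pi a s.
Proof.
case: pi => [|x pi] hpi; first by have := perm_size hpi.
have hx : x \in a :: s by rewrite -(perm_mem hpi) mem_head.
have covers : {subset a :: s <= x :: pi} by move=> y; rewrite (perm_mem hpi).
apply: index_inj; [exact: mem_head | exact/covers/minpi_mem |].
by apply/eqP; rewrite eqn_leq minpi_le //= eqxx.
Qed.

Theorem proposition1 (T : eqType) (n : nat) (P : seq T) (l : T) (pi : seq T)
  (hP : uniq P) (hn : size P = n) (hl : l \notin P)
  (hpi : perm_eq pi (l :: P)) (hpi1 : head l pi != l) :
  let m := minpi2 pi (last l P) l in
  let bs := betas pi P l m (size P).+1 (head l pi) in
  let S := lts pi (line_tree l P) in
  let bw := last l bs in
  let S'w := if bw == l then S bw else droplast (S bw) ++ [:: bw] in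
  [/\ last l bs = m,
      all (fun b => S b != [::]) bs
    & P = flatten [seq droplast (S b) ++ [:: b] | b <- droplast bs] ++ S'w].
Proof.
have huniq : uniq (l :: P) by rewrite /= hl hP.
have covers : {subset l :: P <= pi} by move=> x; rewrite (perm_mem hpi).
have hPne : P != [::] by apply: contraNneq hpi1 => eP; rewrite (head_minpi hpi) eP.
have ready : suffix_ready pi P l [::] P.
  by split => //; exists [::] => //; rewrite /= tmin_line_tree.
rewrite (head_minpi hpi).
exact: decomposition_from_suffix huniq covers _ _ _ ready hPne (leqnSn _).
Qed.
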